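(* Let $n\ge 1$ be an integer, $a>0$, and let $a_0,\dots,a_{n-1}:((-a,a)\setminus\{0\})\times\mathbb{K}\to\mathbb{K}$ be arbitrary functions, where $\mathbb{K}=\mathbb{R}$ or $\mathbb{C}$. Let $f\in C^\infty(-a,a)$ be a solution of $$f^{(n)}(x)+a_{n-1}(x,f(x))f^{(n-1)}(x)+\cdots+a_0(x,f(x))f(x)=0,\qquad x\in(-a,a)\setminus\{0\},$$ satisfying $f(0)=f'(0)=\cdots=f^{(n-1)}(0)=0$. Let $B_n=\sum_{k=0}^{n-1}\frac{1}{k!}$ and suppose $$\limsup_{x\to 0}|x|^{n-k}\,|a_k(x,f(x))|< \frac{1}{B_n},\qquad k=0,1,\dots,n-1.$$ Then there exists $\delta>0$ such that $f\equiv 0$ on $[-\delta,\delta]$.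
   Context: The coefficients may be singular at $x=0$; the equation is only required to hold for $x\neq 0$. *)

From Stdlib Require Import Reals Lra Arith Factorial.
Open Scope R_scope.

Definition B (n : nat) : R := sum_f_R0 (fun k => / INR (fact k)) (n - 1).

(* limsup_{x -> 0} g x < c  (g considered on the punctured neighbourhood of 0):
   inf_{d>0} sup_{0<|x|<d} g x < c, written out. *)
Definition limsup_at0_lt (g : R -> R) (c : R) : Prop :=
  exists c', c' < c /\ exists d, 0 < d /\
    forall x, 0 < Rabs x < d -> g x <= c'.

(* D is the sequence of derivatives of f on (-a,a): D 0 = f and
   D (k+1) is the derivative of D k at every point of (-a,a).
   Existence of such D is exactly f in C^infinity(-a,a). *)
Definition derivs_on (a : R) (f : R -> R) (D : nat -> R -> R) : Prop :=
  (forall x, -a < x < a -> D 0%nat x = f x) /\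
  (forall k x, -a < x < a -> derivable_pt_lim (D k) x (D (S k) x)).

Definition smooth_on (a : R) (f : R -> R) : Prop := exists D, derivs_on a f D.

Definition Cx : Type := (R * R)%type.
Definition C0 : Cx := (0, 0).
Definition Cadd (z w : Cx) : Cx := (fst z + fst w, snd z + snd w).
Definition Cmul (z w : Cx) : Cx :=
  (fst z * fst w - snd z * snd w, fst z * snd w + snd z * fst w).
Definition Cnorm (z : Cx) : R := sqrt (fst z ^ 2 + snd z ^ 2).
Fixpoint Csum (F : nat -> Cx) (m : nat) : Cx :=
  match m with
  | O => F O
  | S m' => Cadd (Csum F m') (F (S m'))
  end.

Definition Cderivs_on (a : R) (f : R -> Cx) (D : nat -> R -> Cx) : Prop :=
  (forall x, -a < x < a -> D 0%nat x = f x) /\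
  (forall k x, -a < x < a ->
     derivable_pt_lim (fun t => fst (D k t)) x (fst (D (S k) x)) /\
     derivable_pt_lim (fun t => snd (D k t)) x (snd (D (S k) x))).

Definition Csmooth_on (a : R) (f : R -> Cx) : Prop := exists D, Cderivs_on a f D.

(* Choose
   d > 0 and c < 1/B_n with |x|^(n-k) |a_k| <= c on 0 < |x| <= d, and let
   M = max_[-d,d] |f^(n)|.  Integrating n times from 0 (each step uses the
   comparison principle |g'| <= p' => |g(x) - g(0)| <= |p(x) - p(0)|) gives
   |f^(n-j)(x)| <= M |x|^j / j!.  Inserting these bounds into the equation
   yields |f^(n)(x)| <= sum_k c M / (n-k)! <= c B_n M, so M <= c B_n M,
   hence M = 0 and f = 0 on [-d, d]. *)
From Stdlib Require Import Reals Lra Lia Factorial.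
Open Scope R_scope.

Lemma nondecreasing_of_deriv_nonneg (h h' : R -> R) (u v : R) :
  u <= v ->
  (forall t, u <= t <= v -> derivable_pt_lim h t (h' t)) ->
  (forall t, u <= t <= v -> 0 <= h' t) ->
  h u <= h v.
Proof.
  intros Huv Hd Hpos. destruct Huv as [Huv | <-]; [| lra].
  destruct (MVT_cor2 h h' u v Huv Hd) as [t [Hmvt Ht]].
  assert (0 <= h' t * (v - u)) by (apply Rmult_le_pos; [apply Hpos |]; lra).
  lra.
Qed.

Lemma increment_le_of_deriv_le (g g' p p' : R -> R) (u v : R) :
  u <= v ->
  (forall t, u <= t <= v -> derivable_pt_lim g t (g' t)) ->
  (forall t, u <= t <= v -> derivable_pt_lim p t (p' t)) ->
  (forall t, u <= t <= v -> Rabs (g' t) <= p' t) ->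
  Rabs (g v - g u) <= p v - p u.
Proof.
  intros Huv Hg Hp Hb.
  assert (Hminus : p u - g u <= p v - g v).
  { apply (nondecreasing_of_deriv_nonneg (fun t => p t - g t) (fun t => p' t - g' t));
      [exact Huv | intros t Ht; apply derivable_pt_lim_minus; auto |].
    intros t Ht. pose proof (Hb t Ht). pose proof (Rle_abs (g' t)). lra. }
  assert (Hplus : p u + g u <= p v + g v).
  { apply (nondecreasing_of_deriv_nonneg (fun t => p t + g t) (fun t => p' t + g' t));
      [exact Huv | intros t Ht; apply derivable_pt_lim_plus; auto |].
    intros t Ht. pose proof (Hb t Ht). pose proof (Rle_abs (- g' t)).
    rewrite Rabs_Ropp in *. lra. }
  apply Rabs_le. lra.
Qed.

(* The factorial identity behind (C t^(m+1)/(m+1)!)' = C t^m/m!. *)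
Lemma div_fact_succ_mul (C : R) (m : nat) :
  C / INR (fact (S m)) * INR (S m) = C / INR (fact m).
Proof.
  change (fact (S m)) with (S m * fact m)%nat. rewrite mult_INR.
  pose proof (INR_fact_lt_0 m). assert (0 < INR (S m)) by (apply lt_0_INR; lia).
  field. lra.
Qed.

Lemma integrate_power_bound (g g' : R -> R) (x C : R) (m : nat) :
  (forall t, Rmin 0 x <= t <= Rmax 0 x -> derivable_pt_lim g t (g' t)) ->
  g 0 = 0 ->
  (forall t, Rmin 0 x <= t <= Rmax 0 x -> Rabs (g' t) <= C * Rabs t ^ m / INR (fact m)) ->
  Rabs (g x) <= C * Rabs x ^ S m / INR (fact (S m)).
Proof.
  intros Hd Hg0 Hb. set (K := C / INR (fact (S m))).
  assert (HK : forall s, K * (INR (S m) * s) = C * s / INR (fact m)).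
  { intros s. replace (C * s / INR (fact m)) with (C / INR (fact m) * s) by (unfold Rdiv; ring).
    rewrite <- div_fact_succ_mul. fold K. ring. }
  replace (C * Rabs x ^ S m / INR (fact (S m))) with (K * Rabs x ^ S m)
    by (unfold K, Rdiv; ring).
  destruct (Rle_lt_dec 0 x) as [Hx | Hx].
  - rewrite Rmin_left, Rmax_right in * by lra.
    assert (Hp : forall t, derivable_pt_lim (fun s => K * s ^ S m) t (K * (INR (S m) * t ^ m)))
      by (intros t; apply derivable_pt_lim_scal, derivable_pt_lim_pow).
    pose proof (increment_le_of_deriv_le g g' _ _ 0 x Hx Hd (fun t _ => Hp t)) as Hinc.
    rewrite Hg0, Rminus_0_r, Rabs_right with (r := x) in * by lra.
    replace (K * x ^ S m) with (K * x ^ S m - K * 0 ^ S m) by (simpl; ring).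
    apply Hinc. intros t Ht. rewrite HK.
    rewrite <- (Rabs_right t) at 2 by lra. apply Hb, Ht.
  - rewrite Rmin_right, Rmax_left in * by lra.
    assert (Hp : forall t,
      derivable_pt_lim (fun s => - (K * (- s) ^ S m)) t (K * (INR (S m) * (- t) ^ m))).
    { intros t.
      pose proof (derivable_pt_lim_comp (fun s => - s) (fun y => y ^ S m) t _ _
        (derivable_pt_lim_opp id t 1 (derivable_pt_lim_id t))
        (derivable_pt_lim_pow (- t) (S m))) as Hpow.
      pose proof (derivable_pt_lim_opp _ t _ (derivable_pt_lim_scal _ K t _ Hpow)) as Hq.
      simpl in Hq. replace (K * (INR (S m) * (- t) ^ m)) with
        (- (K * (INR (S m) * (- t) ^ m * -1))) by ring. exact Hq. }
    assert (Hx' : x <= 0) by lra.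
    pose proof (increment_le_of_deriv_le g g' _ _ x 0 Hx' Hd (fun t _ => Hp t)) as Hinc.
    rewrite Hg0, Rminus_0_l, Rabs_Ropp, Rabs_left with (r := x) in * by lra.
    replace (K * (- x) ^ S m) with (- (K * (- 0) ^ S m) - - (K * (- x) ^ S m)) by (simpl; ring).
    apply Hinc. intros t Ht. rewrite HK.
    rewrite <- (Rabs_left1 t) by lra. apply Hb, Ht.
Qed.

Lemma Rabs_dot_le (a b c d : R) :
  Rabs (a * c + b * d) <= sqrt (a ^ 2 + b ^ 2) * sqrt (c ^ 2 + d ^ 2).
Proof.
  rewrite <- sqrt_mult by nra. rewrite <- sqrt_Rsqr_abs.
  apply sqrt_le_1; [apply Rle_0_sqr | nra |].
  unfold Rsqr.
  assert (E : (a ^ 2 + b ^ 2) * (c ^ 2 + d ^ 2) - (a * c + b * d) * (a * c + b * d)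
              = (a * d - b * c) ^ 2) by ring.
  pose proof (pow2_ge_0 (a * d - b * c)). lra.
Qed.

Lemma Cnorm_nonneg (z : Cx) : 0 <= Cnorm z.
Proof. apply sqrt_pos. Qed.

Lemma Cnorm_mul (z w : Cx) : Cnorm (Cmul z w) = Cnorm z * Cnorm w.
Proof. unfold Cnorm, Cmul; simpl. rewrite <- sqrt_mult by nra. f_equal. ring. Qed.

Lemma Cnorm_add (z w : Cx) : Cnorm (Cadd z w) <= Cnorm z + Cnorm w.
Proof.
  destruct z as [a b], w as [c d]. unfold Cnorm, Cadd; cbn [fst snd].
  pose proof (Rabs_dot_le a b c d) as Hcs. pose proof (Rle_abs (a * c + b * d)).
  pose proof (sqrt_pos (a ^ 2 + b ^ 2)). pose proof (sqrt_pos (c ^ 2 + d ^ 2)).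
  assert (Hsz : sqrt (a ^ 2 + b ^ 2) * sqrt (a ^ 2 + b ^ 2) = a ^ 2 + b ^ 2)
    by (apply sqrt_sqrt; nra).
  assert (Hsw : sqrt (c ^ 2 + d ^ 2) * sqrt (c ^ 2 + d ^ 2) = c ^ 2 + d ^ 2)
    by (apply sqrt_sqrt; nra).
  set (sz := sqrt (a ^ 2 + b ^ 2)) in *. set (sw := sqrt (c ^ 2 + d ^ 2)) in *.
  rewrite <- (sqrt_pow2 (sz + sw)) by lra.
  pose proof (pow2_ge_0 (a + c)). pose proof (pow2_ge_0 (b + d)).
  apply sqrt_le_1; [lra | apply pow2_ge_0 |].
  replace ((sz + sw) ^ 2) with (sz * sz + sw * sw + 2 * (sz * sw)) by ring.
  replace ((a + c) ^ 2 + (b + d) ^ 2) with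
    ((a ^ 2 + b ^ 2) + (c ^ 2 + d ^ 2) + 2 * (a * c + b * d)) by ring.
  lra.
Qed.

Lemma Cnorm_sum (F : nat -> Cx) (m : nat) :
  Cnorm (Csum F m) <= sum_f_R0 (fun k => Cnorm (F k)) m.
Proof.
  induction m as [| m IH]; simpl; [lra |].
  eapply Rle_trans; [apply Cnorm_add | lra].
Qed.

Lemma Cnorm_eq0 (z : Cx) : Cnorm z = 0 -> z = C0.
Proof.
  destruct z as [a b]. unfold Cnorm, C0; cbn [fst snd]. intros H.
  apply sqrt_eq_0 in H; [| nra].
  assert (a = 0) by nra. assert (b = 0) by nra. subst; reflexivity.
Qed.

Lemma Cnorm_of_sum_eq0 (z w : Cx) : Cadd z w = C0 -> Cnorm z = Cnorm w.
Proof.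
  destruct z as [a b], w as [c d]. unfold Cadd, C0, Cnorm; cbn [fst snd]. intros H.
  injection H as H1 H2. f_equal. replace a with (- c) by lra. replace b with (- d) by lra. ring.
Qed.

Lemma Cnorm_real (r : R) : Cnorm (r, 0) = Rabs r.
Proof.
  unfold Cnorm; cbn [fst snd]. rewrite <- sqrt_Rsqr_abs. f_equal. unfold Rsqr. ring.
Qed.

Lemma Cnorm_continuity (g g' : R -> Cx) (x : R) :
  derivable_pt_lim (fun t => fst (g t)) x (fst (g' x)) ->
  derivable_pt_lim (fun t => snd (g t)) x (snd (g' x)) ->
  continuity_pt (fun t => Cnorm (g t)) x.
Proof.
  intros H1 H2.
  apply (continuity_pt_comp (fun t => fst (g t) ^ 2 + snd (g t) ^ 2) sqrt x).
  - apply derivable_continuous_pt. eexists.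
    apply derivable_pt_lim_plus;
      apply (derivable_pt_lim_comp _ (fun y => y ^ 2)); try eassumption;
      apply derivable_pt_lim_pow.
  - apply continuity_pt_sqrt. nra.
Qed.

(* The integration step for C-valued functions: project onto the direction of
   g(x), i.e. apply the real step to s |-> <g(x), g(s)>, and use Cauchy–Schwarz. *)
Lemma Cintegrate_power_bound (g g' : R -> Cx) (x C : R) (m : nat) :
  0 <= C ->
  (forall t, Rmin 0 x <= t <= Rmax 0 x ->
     derivable_pt_lim (fun s => fst (g s)) t (fst (g' t)) /\
     derivable_pt_lim (fun s => snd (g s)) t (snd (g' t))) ->
  g 0 = C0 ->
  (forall t, Rmin 0 x <= t <= Rmax 0 x -> Cnorm (g' t) <= C * Rabs t ^ m / INR (fact m)) ->
  Cnorm (g x) <= C * Rabs x ^ S m / INR (fact (S m)).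
Proof.
  intros HC Hd Hg0 Hb. set (u := g x). set (bound := C * Rabs x ^ S m / INR (fact (S m))).
  assert (Hbound : 0 <= bound).
  { unfold bound, Rdiv. apply Rmult_le_pos; [apply Rmult_le_pos; [exact HC | apply pow_le, Rabs_pos] |].
    left; apply Rinv_0_lt_compat, INR_fact_lt_0. }
  assert (Hproj : Rabs (fst u * fst (g x) + snd u * snd (g x)) <= (C * Cnorm u) * Rabs x ^ S m / INR (fact (S m))).
  { apply (integrate_power_bound (fun s => fst u * fst (g s) + snd u * snd (g s))
                                 (fun s => fst u * fst (g' s) + snd u * snd (g' s))).
    - intros t Ht. destruct (Hd t Ht) as [D1 D2].
      apply derivable_pt_lim_plus; apply derivable_pt_lim_scal; assumption.
    - rewrite Hg0. simpl. ring.
    - intros t Ht. eapply Rle_trans; [apply Rabs_dot_le |].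
      fold (Cnorm (g' t)) (Cnorm u).
      replace (C * Cnorm u * Rabs t ^ m / INR (fact m)) with
        (Cnorm u * (C * Rabs t ^ m / INR (fact m))) by (unfold Rdiv; ring).
      apply Rmult_le_compat_l; [apply Cnorm_nonneg | auto]. }
  assert (Hsq : fst u * fst (g x) + snd u * snd (g x) = Cnorm u * Cnorm u).
  { unfold Cnorm. rewrite sqrt_sqrt by nra. fold u. ring. }
  rewrite Hsq, Rabs_right in Hproj by nra.
  destruct (Cnorm_nonneg u) as [Hu | Hu]; [| fold bound; rewrite <- Hu; exact Hbound].
  apply Rmult_le_reg_l with (Cnorm u); [exact Hu |].
  fold bound. replace (Cnorm u * bound) with (C * Cnorm u * Rabs x ^ S m / INR (fact (S m)))
    by (unfold bound, Rdiv; ring).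
  exact Hproj.
Qed.

Lemma sum_f_R0_rev (u : nat -> R) (N : nat) :
  sum_f_R0 (fun k => u (N - k)%nat) N = sum_f_R0 u N.
Proof.
  revert u; induction N as [| N IH]; intros u; [reflexivity |].
  rewrite tech5, Nat.sub_diag, (decomp_sum u (S N)) by lia. simpl pred.
  rewrite <- (IH (fun j => u (S j))).
  rewrite (sum_eq (fun k => u (S N - k)%nat) (fun k => u (S (N - k)))) by (intros i Hi; f_equal; lia).
  ring.
Qed.

Lemma B_pos (n : nat) : 0 < B n.
Proof.
  unfold B. induction (n - 1)%nat as [| m IH].
  - simpl. lra.
  - rewrite tech5. pose proof (Rinv_0_lt_compat _ (INR_fact_lt_0 (S m))). lra.
Qed.

Lemma sum_inv_fact_compl_le (n : nat) : (1 <= n)%nat ->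
  sum_f_R0 (fun k => / INR (fact (n - k))) (n - 1) <= B n.
Proof.
  intros Hn. unfold B. rewrite <- sum_f_R0_rev. apply sum_Rle. intros k Hk.
  apply Rinv_le_contravar; [apply INR_fact_lt_0 | apply le_INR].
  replace (n - (n - 1 - k))%nat with (S k) by lia. simpl. apply Nat.le_add_r.
Qed.

Lemma limsup_at0_lt_uniform (n : nat) (g : nat -> R -> R) (c0 : R) : 0 < c0 ->
  (forall k, (k < n)%nat -> limsup_at0_lt (g k) c0) ->
  exists c d, 0 <= c /\ c < c0 /\ 0 < d /\
    forall k x, (k < n)%nat -> 0 < Rabs x < d -> g k x <= c.
Proof.
  intros Hc0. induction n as [| n IH]; intros Hl.
  - exists 0, 1. repeat split; try lra. intros; lia.
  - destruct IH as [c [d [Hc [Hcc0 [Hd Hg]]]]]; [intros k Hk; apply Hl; lia |].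
    destruct (Hl n ltac:(lia)) as [c' [Hc' [d' [Hd' Hg']]]].
    exists (Rmax c c'), (Rmin d d').
    pose proof (Rmin_l d d'). pose proof (Rmin_r d d').
    pose proof (Rmax_l c c'). pose proof (Rmax_r c c').
    repeat split; try lra.
    + unfold Rmax; destruct Rle_dec; lra.
    + unfold Rmin; destruct Rle_dec; lra.
    + intros k x Hk Hx. destruct (Nat.eq_dec k n) as [-> | Hkn].
      * pose proof (Hg' x ltac:(lra)). lra.
      * pose proof (Hg k x ltac:(lia) ltac:(lra)). lra.
Qed.

Lemma le_at_of_continuity (h : R -> R) (x0 r L : R) :
  continuity_pt h x0 -> 0 < r ->
  (forall t, x0 < t <= x0 + r -> h t <= L) -> h x0 <= L.
Proof.
  intros Hcont Hr Hb. apply Rnot_lt_le. intros Hlt.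
  destruct (Hcont (h x0 - L)) as [alp [Halp Hclose]]; [lra |].
  set (t := x0 + Rmin (alp / 2) r).
  assert (Hmin : 0 < Rmin (alp / 2) r) by (unfold Rmin; destruct Rle_dec; lra).
  pose proof (Rmin_l (alp / 2) r). pose proof (Rmin_r (alp / 2) r).
  assert (Hdist : Rabs (h t - h x0) < h x0 - L).
  { apply (Hclose t). split.
    - split; [exact I | unfold t; lra].
    - simpl; unfold R_dist, t. rewrite Rabs_right; lra. }
  pose proof (Hb t ltac:(unfold t; lra)).
  pose proof (Rle_abs (- (h t - h x0))). rewrite Rabs_Ropp in *. lra.
Qed.

Lemma segment_in_interval (d x t : R) :
  -d <= x <= d -> Rmin 0 x <= t <= Rmax 0 x -> -d <= t <= d.
Proof. unfold Rmin, Rmax; destruct (Rle_dec 0 x); lra. Qed.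

(* The heart of the argument, stated for the norms N k = |f^(k)| and the
   coefficient sizes e k = |a_k(x, f(x))| on an interval [-d, d] where
   |x|^(n-k) e k x <= c and c B_n < 1. *)
Section NormChainVanishes.

Variables (n : nat) (N e : nat -> R -> R) (d c : R).

Hypothesis n_pos : (1 <= n)%nat.
Hypothesis d_pos : 0 < d.
Hypothesis c_nonneg : 0 <= c.
Hypothesis cB_lt1 : c * B n < 1.
Hypothesis N_nonneg : forall k t, 0 <= N k t.
(* N k vanishes at 0 and is controlled by N (k+1) through one integration. *)
Hypothesis N_integrate : forall k x C m, (k < n)%nat -> 0 <= C -> -d <= x <= d ->
  (forall t, Rmin 0 x <= t <= Rmax 0 x -> N (S k) t <= C * Rabs t ^ m / INR (fact m)) ->
  N k x <= C * Rabs x ^ S m / INR (fact (S m)).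
Hypothesis Nn_continuous : forall x, -d <= x <= d -> continuity_pt (N n) x.
(* The differential equation, in norm. *)
Hypothesis Nn_le : forall x, -d <= x <= d -> x <> 0 ->
  N n x <= sum_f_R0 (fun k => e k x * N k x) (n - 1).
Hypothesis e_bound : forall k x, (k < n)%nat -> -d <= x <= d -> x <> 0 ->
  0 <= e k x /\ Rabs x ^ (n - k) * e k x <= c.

Lemma N_taylor_bound (M : R) :
  0 <= M -> (forall x, -d <= x <= d -> N n x <= M) ->
  forall j x, (j <= n)%nat -> -d <= x <= d ->
    N (n - j)%nat x <= M * Rabs x ^ j / INR (fact j).
Proof.
  intros HM HNM. induction j as [| j IH]; intros x Hj Hx.
  - rewrite Nat.sub_0_r. replace (M * Rabs x ^ 0 / INR (fact 0)) with M by (simpl; field).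
    apply HNM, Hx.
  - apply N_integrate; [lia | exact HM | exact Hx |]. intros t Ht.
    replace (S (n - S j)) with (n - j)%nat by lia.
    apply IH; [lia | eapply segment_in_interval; eauto].
Qed.

(* Feeding the Taylor bounds back into the equation: N n <= c B_n M on [-d, d]
   (at 0 by continuity). *)
Lemma Nn_self_bound (M : R) :
  0 <= M -> (forall x, -d <= x <= d -> N n x <= M) ->
  forall x, -d <= x <= d -> N n x <= c * B n * M.
Proof.
  intros HM HNM.
  assert (Hpunct : forall x, -d <= x <= d -> x <> 0 -> N n x <= c * B n * M).
  { intros x Hx Hx0. eapply Rle_trans; [apply Nn_le; auto |].
    apply Rle_trans with (sum_f_R0 (fun k => / INR (fact (n - k)) * (c * M)) (n - 1)).
    - apply sum_Rle. intros k Hk.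
      destruct (e_bound k x ltac:(lia) Hx Hx0) as [He0 He].
      pose proof (N_taylor_bound M HM HNM (n - k) x ltac:(lia) Hx) as HT.
      replace (n - (n - k))%nat with k in HT by lia.
      assert (Hw : 0 <= M / INR (fact (n - k)))
        by (apply Rmult_le_pos; [exact HM | left; apply Rinv_0_lt_compat, INR_fact_lt_0]).
      apply Rle_trans with (e k x * (M * Rabs x ^ (n - k) / INR (fact (n - k)))).
      + apply Rmult_le_compat_l; assumption.
      + replace (e k x * (M * Rabs x ^ (n - k) / INR (fact (n - k)))) with
          ((Rabs x ^ (n - k) * e k x) * (M / INR (fact (n - k)))) by (unfold Rdiv; ring).
        replace (/ INR (fact (n - k)) * (c * M)) with (c * (M / INR (fact (n - k))))
          by (unfold Rdiv; ring).
        apply Rmult_le_compat_r; assumption.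
    - rewrite <- scal_sum. replace (c * B n * M) with (c * M * B n) by ring.
      apply Rmult_le_compat_l; [nra | apply sum_inv_fact_compl_le, n_pos]. }
  intros x Hx. destruct (Req_dec x 0) as [-> | Hx0]; [| apply Hpunct; assumption].
  apply (le_at_of_continuity (N n) 0 d); [apply Nn_continuous; lra | exact d_pos |].
  intros t Ht. apply Hpunct; lra.
Qed.

(* Taking M = max of N n on [-d, d] gives M <= c B_n M, hence M = 0, and the
   Taylor bound with j = n gives N 0 = 0. *)
Lemma N0_vanishes : forall x, -d <= x <= d -> N 0%nat x = 0.
Proof.
  destruct (continuity_ab_maj (N n) (- d) d) as [x0 [Hmax Hx0]]; [lra | exact Nn_continuous |].
  set (M := N n x0).
  assert (HM : 0 <= M) by apply N_nonneg.
  assert (HM0 : M = 0).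
  { pose proof (Nn_self_bound M HM Hmax x0 Hx0) as HMM. pose proof (B_pos n). fold M in HMM. nra. }
  intros x Hx. pose proof (N_taylor_bound M HM Hmax n x (Nat.le_refl n) Hx) as HT.
  rewrite Nat.sub_diag, HM0 in HT. pose proof (N_nonneg 0 x).
  unfold Rdiv in HT. rewrite !Rmult_0_l in HT. lra.
Qed.

End NormChainVanishes.

Lemma vanishing_complex :
  forall (n : nat) (a : R) (coef : nat -> R -> Cx -> Cx) (f : R -> Cx)
         (D : nat -> R -> Cx),
     (1 <= n)%nat -> 0 < a ->
     Cderivs_on a f D ->
     (forall x, -a < x < a -> x <> 0 ->
        Cadd (D n x) (Csum (fun k => Cmul (coef k x (f x)) (D k x)) (n - 1)) = C0) ->
     (forall k, (k < n)%nat -> D k 0 = C0) ->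
     (forall k, (k < n)%nat ->
        limsup_at0_lt (fun x => Rabs x ^ (n - k) * Cnorm (coef k x (f x))) (/ B n)) ->
     exists delta, 0 < delta /\ delta < a /\
       forall x, -delta <= x <= delta -> f x = C0.
Proof.
  intros n a coef f D Hn Ha [HD0 HD] Hode Hinit Hlim.
  destruct (limsup_at0_lt_uniform n _ (/ B n) (Rinv_0_lt_compat _ (B_pos n)) Hlim)
    as [c [d [Hc [HcB [Hd Hcoef]]]]].
  assert (Hdelta : 0 < Rmin (d / 2) (a / 2)) by (unfold Rmin; destruct Rle_dec; lra).
  pose proof (Rmin_l (d / 2) (a / 2)). pose proof (Rmin_r (d / 2) (a / 2)).
  set (delta := Rmin (d / 2) (a / 2)) in *.
  assert (HcB1 : c * B n < 1).
  { pose proof (B_pos n). rewrite <- (Rinv_l (B n)) by lra.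
    apply Rmult_lt_compat_r; assumption. }
  exists delta. split; [exact Hdelta | split; [lra |]].
  intros x Hx. rewrite <- HD0 by (lra). apply Cnorm_eq0.
  apply (N0_vanishes n (fun k t => Cnorm (D k t)) (fun k t => Cnorm (coef k t (f t))) delta c);
    auto.
  - intros; apply Cnorm_nonneg.
  - intros k y C m Hk HC Hy Hb. apply (Cintegrate_power_bound _ (D (S k))); auto.
    intros t Ht. pose proof (segment_in_interval delta y t Hy Ht). apply HD; lra.
  - intros y Hy. destruct (HD n y ltac:(lra)) as [D1 D2].
    exact (Cnorm_continuity (D n) (D (S n)) y D1 D2).
  - intros y Hy Hy0. rewrite (Cnorm_of_sum_eq0 _ _ (Hode y ltac:(lra) Hy0)).
    eapply Rle_trans; [apply Cnorm_sum |].
    right. apply sum_eq. intros i _. apply Cnorm_mul.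
  - intros k y Hk Hy Hy0. split; [apply Cnorm_nonneg |].
    apply Hcoef; [exact Hk |]. split; [apply Rabs_pos_lt, Hy0 |].
    pose proof (Rabs_le y delta Hy). lra.
Qed.

Lemma Csum_real (u v : nat -> R) (m : nat) :
  Csum (fun k => Cmul (u k, 0) (v k, 0)) m = (sum_f_R0 (fun k => u k * v k) m, 0).
Proof.
  induction m as [| m IH]; cbn [Csum sum_f_R0].
  - unfold Cmul; simpl. f_equal; ring.
  - rewrite IH. unfold Cadd, Cmul; simpl. f_equal; ring.
Qed.

(* The theorem for K = R, by viewing a real solution as a complex one. *)
Lemma vanishing_real :
  forall (n : nat) (a : R) (coef : nat -> R -> R -> R) (f : R -> R)
         (D : nat -> R -> R),
     (1 <= n)%nat -> 0 < a ->
     derivs_on a f D ->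
     (forall x, -a < x < a -> x <> 0 ->
        D n x + sum_f_R0 (fun k => coef k x (f x) * D k x) (n - 1) = 0) ->
     (forall k, (k < n)%nat -> D k 0 = 0) ->
     (forall k, (k < n)%nat ->
        limsup_at0_lt (fun x => Rabs x ^ (n - k) * Rabs (coef k x (f x))) (/ B n)) ->
     exists delta, 0 < delta /\ delta < a /\
       forall x, -delta <= x <= delta -> f x = 0.
Proof.
  intros n a coef f D Hn Ha [HD0 HD] Hode Hinit Hlim.
  destruct (vanishing_complex n a (fun k x _ => (coef k x (f x), 0)) (fun x => (f x, 0))
              (fun k x => (D k x, 0)) Hn Ha) as [delta [Hdelta [Hda Hzero]]].
  - split.
    + intros x Hx. simpl. rewrite HD0 by exact Hx. reflexivity.
    + intros k x Hx. split; [apply HD, Hx | apply derivable_pt_lim_const].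
  - intros x Hx Hx0. rewrite Csum_real. unfold Cadd, C0; simpl.
    rewrite (Hode x Hx Hx0). f_equal; ring.
  - intros k Hk. rewrite (Hinit k Hk). reflexivity.
  - intros k Hk. destruct (Hlim k Hk) as [c' [Hc' [d' [Hd' Hb]]]].
    exists c'. split; [exact Hc' |]. exists d'. split; [exact Hd' |].
    intros x Hx. rewrite Cnorm_real. apply Hb, Hx.
  - exists delta. split; [exact Hdelta | split; [exact Hda |]].
    intros x Hx. specialize (Hzero x Hx). injection Hzero as Hfx. exact Hfx.
Qed.

Theorem mainTheorem2 :
  (* K = R *)
  (forall (n : nat) (a : R) (coef : nat -> R -> R -> R) (f : R -> R)
          (D : nat -> R -> R),
     (1 <= n)%nat -> 0 < a ->
     derivs_on a f D ->
     (forall x, -a < x < a -> x <> 0 ->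
        D n x + sum_f_R0 (fun k => coef k x (f x) * D k x) (n - 1) = 0) ->
     (forall k, (k < n)%nat -> D k 0 = 0) ->
     (forall k, (k < n)%nat ->
        limsup_at0_lt (fun x => Rabs x ^ (n - k) * Rabs (coef k x (f x))) (/ B n)) ->
     exists delta, 0 < delta /\ delta < a /\
       forall x, -delta <= x <= delta -> f x = 0)
  /\
  (* K = C *)
  (forall (n : nat) (a : R) (coef : nat -> R -> Cx -> Cx) (f : R -> Cx)
          (D : nat -> R -> Cx),
     (1 <= n)%nat -> 0 < a ->
     Cderivs_on a f D ->
     (forall x, -a < x < a -> x <> 0 ->
        Cadd (D n x) (Csum (fun k => Cmul (coef k x (f x)) (D k x)) (n - 1)) = C0) ->
     (forall k, (k < n)%nat -> D k 0 = C0) ->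
     (forall k, (k < n)%nat ->
        limsup_at0_lt (fun x => Rabs x ^ (n - k) * Cnorm (coef k x (f x))) (/ B n)) ->
     exists delta, 0 < delta /\ delta < a /\
       forall x, -delta <= x <= delta -> f x = C0).
Proof.
  split; [exact vanishing_real | exact vanishing_complex].
Qed.
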